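(* Let $a\in R$ and let $u\in\mathbb{F}_q$ be the reduction of $a$ modulo $2$. Then $$\eta_a^2=2^m\sum_{Z\in\mathcal{T},\ f_u(z)=0}i^{\mathrm{T}(aZ+2Z^3)},\qquad \eta_a\overline{\eta_a}=2^m\sum_{Z\in\mathcal{T},\ h_u(z)=0}i^{\mathrm{T}(aZ+2Z^3)},$$ $$\eta_a^4=2^m(-1)^{\mathrm{tr}(u^3)}|F_u|\,\eta_a\overline{\eta_a},\qquad(\eta_a\overline{\eta_a})^2=2^m|F_u|\,\eta_a\overline{\eta_a},\qquad \eta_a^3\overline{\eta_a}=2^m|F_u|\,\eta_a^2.$$
   Context: $q=2^m$; $R=GR(4,m)=\mathbb{Z}_4[x]/(f(x))$ with $f$ monic of degree $m$ irreducible mod 2; $\mathcal{T}=\{0,1,\beta,\dots,\beta^{q-2}\}$ is the Teichmüller set ($\beta\in R^*$ of order $q-1$); for $Z\in\mathcal{T}$, $z$ denotes its reduction mod 2 in $\mathbb{F}_q$. $\mathrm{T}:R\to\mathbb{Z}_4$ is the trace $\mathrm{T}(w)=\sum_{j=0}^{m-1}\sigma^j(w)$ with $\sigma(A+2B)=A^2+2B^2$ ($A,B\in\mathcal{T}$), and $\mathrm{tr}$ is the absolute trace $\mathbb{F}_q\to\mathbb{F}_2$. $\eta_a=\sum_{X\in\mathcal{T}}i^{\mathrm{T}(aX+2X^3)}$ and $\overline{\eta_a}$ is its complex conjugate. $f_u(z)=z^2+u^2z+\sqrt{z}+u$ and $h_u(z)=z^2+u^2z+\sqrt z$ (where $\sqrt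 z$ is the unique square root in $\mathbb{F}_q$), and $F_u\subseteq\mathbb{F}_q$ is the set of zeros of $f_u$ in $\mathbb{F}_q$. *)

(* GR(4,m) is modelled literally as Z_4[x]/(f) via qpoly,
   F_q as F_2[x]/(f mod 2). *)
From HB Require Import structures.
From mathcomp Require Import all_boot all_order all_algebra all_field.
Set Implicit Arguments. Unset Strict Implicit. Unset Printing Implicit Defensive.
Import Order.TTheory GRing.Theory Num.Theory.
Local Open Scope ring_scope.

Definition red2 (x : 'Z_4) : 'F_2 := (val x)%:R.

Definition fbar (f : {poly 'Z_4}) : {poly 'F_2} := map_poly red2 f.

Notation GR f := {poly %/ f}.
Notation Fq f := {poly %/ (fbar f)}.

Definition redR (f : {poly 'Z_4}) (w : GR f) : Fq f :=
  in_qpoly (fbar f) (map_poly red2 (w : {poly 'Z_4})).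

Definition teich (f : {poly 'Z_4}) (m : nat) (beta : GR f) : {set GR f} :=
  0 |: [set beta ^+ (val k) | k : 'I_(2 ^ m - 1)].

(* Frobenius sigma(A + 2B) = A^2 + 2B^2 with A, B in T
   (the 2-adic decomposition is unique) *)
Definition sigmaF (f : {poly 'Z_4}) (m : nat) (beta : GR f) (w : GR f) : GR f :=
  match [pick p : (GR f * GR f)%type |
           (p.1 \in teich m beta) && (p.2 \in teich m beta)
           && (w == p.1 + 2%:R * p.2)] with
  | Some p => p.1 ^+ 2 + 2%:R * p.2 ^+ 2
  | None => 0
  end.

(* trace T : R -> Z_4, T(w) = sum_{j<m} sigma^j(w); the sum is a constant of R,
   i.e. an element of Z_4, read off as the constant coefficient *)
Definition trGR (f : {poly 'Z_4}) (m : nat) (beta : GR f) (w : GR f) : 'Z_4 :=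
  ((\sum_(j < m) iter j (sigmaF m beta) w : GR f) : {poly 'Z_4})`_0.

Definition iexp (f : {poly 'Z_4}) (m : nat) (beta : GR f) (w : GR f) : algC :=
  'i ^+ (val (trGR m beta w)).

Definition etaGR (f : {poly 'Z_4}) (m : nat) (beta : GR f) (a : GR f) : algC :=
  \sum_(X in teich m beta) iexp m beta (a * X + 2%:R * X ^+ 3).

(* absolute trace F_q -> F_2 (valued in the prime subfield of F_q) *)
Definition atr (f : {poly 'Z_4}) (m : nat) (z : Fq f) : Fq f :=
  \sum_(j < m) z ^+ (2 ^ j).

Definition sqrtF (f : {poly 'Z_4}) (z : Fq f) : Fq f :=
  odflt 0 [pick y : Fq f | y ^+ 2 == z].

Definition f_u (f : {poly 'Z_4}) (u z : Fq f) : Fq f :=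
  z ^+ 2 + u ^+ 2 * z + sqrtF z + u.
Definition h_u (f : {poly 'Z_4}) (u z : Fq f) : Fq f :=
  z ^+ 2 + u ^+ 2 * z + sqrtF z.

Definition Fu (f : {poly 'Z_4}) (u : Fq f) : {set Fq f} := [set z | f_u u z == 0].

(* Write eta_a as a sum over F_q of g(z) = i^T(a Z + 2 Z^3), where Z is the
   Teichmuller lift of z.  Lifts add as Z + Z' = lift(z + z') + 2 sqrt(Z Z'), and
   i^T(2 C) = (-1)^tr(c); hence g(z + z') = g(z) g(z') (-1)^tr(z' h_u(z)) with h_u
   additive and tr(z' h_u(z)) symmetric in z, z', i.e. g is a quadratic form.
   Expanding eta_a^2 and eta_a conj(eta_a) and summing the additive characters
   (-1)^tr(x c) over x gives the first two identities.  On the kernel H of h_u,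
   g is a character with values +-1, so S = sum_H g satisfies S^2 = |H| S.  The
   zeros of f_u form the coset u^2 + H, so |F_u| = |H|, sum_(F_u) g = g(u^2) S and
   g(u^2)^2 = (-1)^tr(u^3); the last three identities follow. *)

From HB Require Import structures.
From mathcomp Require Import all_boot all_order all_algebra all_field.
From mathcomp Require Import ring zify.
Set Implicit Arguments.
Unset Strict Implicit.
Unset Printing Implicit Defensive.
Import Order.TTheory GRing.Theory Num.Theory.
Local Open Scope ring_scope.

Lemma Z4_cases (P : 'Z_4 -> Prop) :
  P 0 -> P 1 -> P 2%:R -> P 3%:R -> forall x, P x.
Proof. by move=> P0 P1 P2 P3 x; rewrite -(natr_Zp x); case: x => -[|[|[|[|]]]]. Qed.

Lemma red2B (x y : 'Z_4) : red2 (x - y) = red2 x - red2 y.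
Proof. by move: x y; apply: Z4_cases; apply: Z4_cases; apply/eqP. Qed.

Lemma red2M (x y : 'Z_4) : red2 (x * y) = red2 x * red2 y.
Proof. by move: x y; apply: Z4_cases; apply: Z4_cases; apply/eqP. Qed.

Lemma red21 : red2 1 = 1. Proof. by apply/eqP. Qed.

HB.instance Definition _ := GRing.isZmodMorphism.Build 'Z_4 'F_2 red2 red2B.
HB.instance Definition _ :=
  GRing.isMonoidMorphism.Build 'Z_4 'F_2 red2 (conj red21 red2M).

Definition half4 (x : 'Z_4) : 'Z_4 := (val x %/ 2)%:R.

Lemma half4K (x : 'Z_4) : red2 x = 0 -> half4 x + half4 x = x.
Proof. by move: x; apply: Z4_cases => /eqP h; apply/eqP; move: h. Qed.

Lemma Z4_double_eq0 (x : 'Z_4) : (x + x == 0) = (red2 x == 0).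
Proof. by move: x; apply: Z4_cases. Qed.

Lemma Z4_double_odd (x : 'Z_4) : red2 x = 1 -> x + x = 2%:R.
Proof. by move: x; apply: Z4_cases => /eqP h; apply/eqP; move: h. Qed.

Lemma val_qpolyD (A : nzRingType) (h : {poly A}) (x y : {poly %/ h}) :
  val (x + y) = val x + val y.
Proof. by []. Qed.

Lemma redRB (f : {poly 'Z_4}) (x y : GR f) : redR (x - y) = redR x - redR y.
Proof. by rewrite /redR (_ : val (x - y) = val x - val y) // !raddfB. Qed.

HB.instance Definition _ (f : {poly 'Z_4}) :=
  GRing.isZmodMorphism.Build (GR f) (Fq f) (@redR f) (@redRB f).

Section Reduction.
Variable f : {poly 'Z_4}.
Hypotheses (f_monic : f \is monic) (f_gt1 : (1 < size f)%N).

Local Notation R := (GR f).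
Local Notation F := (Fq f).

Lemma size_fbar : size (fbar f) = size f.
Proof. by rewrite /fbar size_map_poly_id0 // (monicP f_monic) rmorph1 oner_neq0. Qed.

Lemma fbar_monic : fbar f \is monic.
Proof.
by apply/monicP; rewrite /fbar lead_coef_map_id0 ?(monicP f_monic) ?rmorph1 ?oner_neq0.
Qed.

Lemma mk_monic_f : mk_monic f = f.
Proof. by rewrite /mk_monic f_gt1 f_monic. Qed.

Lemma mk_monic_fbar : mk_monic (fbar f) = fbar f.
Proof. by rewrite /mk_monic size_fbar f_gt1 fbar_monic. Qed.

Lemma size_GR (w : R) : (size (val w) < size f)%N.
Proof. by rewrite -[in X in (_ < X)%N]mk_monic_f size_mk_monic. Qed.

Lemma val_in_qpoly_GR (p : {poly 'Z_4}) :
  (size p < size f)%N -> val (in_qpoly f p) = p.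
Proof. by move=> sp; apply: in_qpoly_small; rewrite mk_monic_f. Qed.

Lemma val_redR (w : R) : val (redR w) = map_poly red2 (val w).
Proof.
apply: in_qpoly_small; rewrite mk_monic_fbar size_fbar.
by rewrite (leq_ltn_trans (size_poly _ _)) ?size_GR.
Qed.

Lemma in_qpoly_fbar_rmodp (P : {poly 'Z_4}) :
  in_qpoly (fbar f) (map_poly red2 (Pdiv.CommonRing.rmodp P f)) =
  in_qpoly (fbar f) (map_poly red2 P).
Proof.
rewrite [in RHS](Pdiv.RingMonic.rdivp_eq f_monic P) rmorphD rmorphM /= in_qpolyD.
suff -> : in_qpoly (fbar f) (map_poly red2 (Pdiv.CommonRing.rdivp P f) * fbar f) = 0.
  by rewrite add0r.
by apply: val_inj; rewrite /= mk_monic_fbar Pdiv.RingMonic.rmodp_mull ?fbar_monic.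
Qed.

Lemma val_mulGR (x y : R) :
  val (x * y) = Pdiv.CommonRing.rmodp (val x * val y) f.
Proof.
have -> : val (x * y) = Pdiv.CommonRing.rmodp (val x * val y) (mk_monic f) by [].
by congr Pdiv.CommonRing.rmodp; exact: mk_monic_f.
Qed.

Lemma redRM (x y : R) : redR (x * y) = redR x * redR y.
Proof. by rewrite [LHS]/redR val_mulGR in_qpoly_fbar_rmodp !rmorphM. Qed.

Lemma redR1 : redR (1 : R) = 1.
Proof. by rewrite /redR rmorph1 in_qpoly1. Qed.

Lemma redRX (x : R) n : redR (x ^+ n) = redR x ^+ n.
Proof. by elim: n => [|n IH]; rewrite ?redR1 // !exprS redRM IH. Qed.

Lemma natr4_GR : 4%:R = 0 :> R.
Proof.
apply: val_inj; rewrite [LHS]qpolyC_natr -polyC_natr.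
by have -> : 4%:R = 0 :> 'Z_4 by apply/eqP.
Qed.

Lemma mulrn4_GR (x : R) : x *+ 4 = 0.
Proof. by rewrite -mulr_natr natr4_GR mulr0. Qed.

Lemma sqr_add_double (A C : R) : (A + (C + C)) ^+ 2 = A ^+ 2.
Proof.
have -> : (A + (C + C)) ^+ 2 = A ^+ 2 + (C * (A + C)) *+ 4 by ring.
by rewrite mulrn4_GR addr0.
Qed.

Lemma pchar_Fq : 2 \in [pchar F].
Proof. by rewrite pchar_qpoly (@pchar_Fp 2). Qed.

Lemma Fq_addrr (x : F) : x + x = 0.
Proof. exact: (addrr_pchar2 pchar_Fq x). Qed.

Lemma Fq_exprD_2n (x y : F) j : (x + y) ^+ (2 ^ j) = x ^+ (2 ^ j) + y ^+ (2 ^ j).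
Proof. by apply: exprDn_pchar; rewrite pnatX (pnatE _ (isT : prime 2)) pchar_Fq. Qed.

Lemma redR_eq0 (w : R) : redR w = 0 <-> forall i, red2 (val w)`_i = 0.
Proof.
split=> [w0 i | w0].
  by rewrite -coef_map_id0 ?rmorph0 // -val_redR w0 coef0.
apply: val_inj; rewrite val_redR; apply/polyP=> i.
by rewrite coef_map_id0 ?rmorph0 ?w0 ?coef0.
Qed.

Lemma double_GR_eq0 (w : R) : (w + w == 0) = (redR w == 0).
Proof.
apply/eqP/eqP=> [w0 | /redR_eq0 w0].
  by apply/redR_eq0=> i; apply/eqP; rewrite -Z4_double_eq0 -coefD -val_qpolyD w0 coef0.
apply: val_inj; apply/polyP=> i; rewrite val_qpolyD coefD coef0.
by apply/eqP; rewrite Z4_double_eq0 w0.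
Qed.

Lemma double_GR_inj (x y : R) : (x + x == y + y) = (redR x == redR y).
Proof. by rewrite -subr_eq0 opprD addrACA double_GR_eq0 raddfB subr_eq0. Qed.

Lemma redR_eq0_double (w : R) : redR w = 0 -> exists C : R, w = C + C.
Proof.
move/redR_eq0=> w0; exists (in_qpoly f (map_poly half4 (val w))).
apply: val_inj; rewrite val_qpolyD val_in_qpoly_GR; last first.
  by rewrite (leq_ltn_trans (size_poly _ _)) ?size_GR.
by apply/polyP=> i; rewrite coefD coef_map_id0 ?half4K.
Qed.

Lemma Fq_sqrD (x y : F) : (x + y) ^+ 2 = x ^+ 2 + y ^+ 2.
Proof. by have := Fq_exprD_2n x y 1; rewrite expn1. Qed.

Section Teichmuller.
Variable m : nat.
Hypothesis f_size : size f = m.+1.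
Variable beta : GR f.
Hypotheses (beta_ord : beta ^+ (2 ^ m - 1) = 1)
  (beta_prim : forall k : nat, (0 < k < 2 ^ m - 1)%N -> beta ^+ k != 1).

Local Notation q := (2 ^ m)%N.
Local Notation T := (teich m beta).
Local Notation qh := (2 ^ m.-1)%N.

Let m_gt0 : (0 < m)%N. Proof. by rewrite -ltnS -f_size. Qed.

Lemma q_gt1 : (1 < q)%N.
Proof. by rewrite -{1}(expn0 2) ltn_exp2l. Qed.

Lemma qh_double : (qh * 2)%N = q.
Proof. by rewrite -expnSr prednK. Qed.

Lemma beta_expr_inv k : beta ^+ k * beta ^+ (k * (q - 2)) = 1.
Proof.
rewrite -exprD -{1}(muln1 k) -mulnDr (_ : 1 + (q - 2) = q - 1)%N.
  by rewrite mulnC exprM beta_ord expr1n.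
by have := q_gt1; lia.
Qed.

Lemma beta_expr_inj (k l : nat) :
  (k < q - 1)%N -> (l < q - 1)%N -> beta ^+ k = beta ^+ l -> k = l.
Proof.
wlog lt_kl : k l / (k < l)%N.
  move=> hwlog hk hl e; case: (ltngtP k l) => [lt_kl|lt_lk|//].
    exact: hwlog.
  exact/esym/hwlog.
move=> hk hl e.
have : beta ^+ (l - k) = 1.
  rewrite -[LHS]mul1r -{1}(beta_expr_inv k) mulrAC -exprD (subnKC (ltnW lt_kl)).
  by rewrite -e beta_expr_inv.
have : (0 < l - k < q - 1)%N.
  by rewrite subn_gt0 lt_kl (leq_ltn_trans (leq_subr _ _) hl).
by move/beta_prim/eqP.
Qed.

Lemma teichP (X : R) :
  reflect (X = 0 \/ exists2 k, (k < q - 1)%N & X = beta ^+ k) (X \in T).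
Proof.
rewrite /teich in_setU1; apply: (iffP orP) => [[/eqP|/imsetP[k _]] ->|[->|[k hk ->]]].
- by left.
- by right; exists k.
- by left.
- by right; apply/imsetP; exists (Ordinal hk).
Qed.

Lemma teich0 : (0 : R) \in T.
Proof. by apply/teichP; left. Qed.

Lemma teich_expr_beta k : beta ^+ k \in T.
Proof.
apply/teichP; right; exists (k %% (q - 1))%N; last by rewrite expr_mod.
by rewrite ltn_mod subn_gt0 q_gt1.
Qed.

Lemma teichM (X Y : R) : X \in T -> Y \in T -> X * Y \in T.
Proof.
move=> /teichP[-> | [k _ ->]]; first by rewrite mul0r teich0.
move=> /teichP[-> | [l _ ->]]; first by rewrite mulr0 teich0.
by rewrite -exprD teich_expr_beta.
Qed.

Lemma teichX (X : R) n : X \in T -> X ^+ n \in T.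
Proof.
move=> hX; elim: n => [|n IH]; last by rewrite exprS teichM.
by rewrite expr0 -(expr0 beta) teich_expr_beta.
Qed.

Lemma teich_expr_q1 (X : R) : X \in T -> X != 0 -> X ^+ (q - 1) = 1.
Proof.
move=> /teichP[->|[k _ ->]]; first by rewrite eqxx.
by rewrite -exprM mulnC exprM beta_ord expr1n.
Qed.

Lemma teich_expr_q (X : R) : X \in T -> X ^+ q = X.
Proof.
move=> hX; have [->|X0] := eqVneq X 0; first by rewrite expr0n expn_eq0.
by rewrite -(subnK (ltnW q_gt1)) exprD teich_expr_q1 ?mul1r.
Qed.

Lemma card_teich : #|T| = q.
Proof.
rewrite /teich cardsU1 card_in_imset => [|k l _ _ /beta_expr_inj e]; last first.
  exact: val_inj (e (ltn_ord k) (ltn_ord l)).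
have -> : (0 : R) \notin [set beta ^+ val k | k : 'I_(q - 1)].
  apply/imsetP=> -[k _ /esym/eqP]; apply/negP; apply/eqP => k0.
  by have := beta_expr_inv k; rewrite k0 mul0r => /esym/eqP; rewrite oner_eq0.
by rewrite card_ord add1n subn1 prednK // ltnW // q_gt1.
Qed.

(* X = 1 + 2 C squares to 1, and X = X ^+ q = (X ^+ 2) ^+ qh. *)
Lemma teich_redR_eq1 (X : R) : X \in T -> redR X = 1 -> X = 1.
Proof.
move=> hX X1; have /redR_eq0_double [C eC] : redR (X - 1) = 0.
  by rewrite raddfB /= X1 redR1 subrr.
have X2 : X ^+ 2 = 1 by rewrite -(subrK 1 X) eC addrC sqr_add_double expr1n.
by rewrite -(teich_expr_q hX) -qh_double mulnC exprM X2 expr1n.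
Qed.

Lemma redR_teich_eq0 (X : R) : X \in T -> (redR X == 0) = (X == 0).
Proof.
move=> hX; apply/eqP/eqP => [X0|->]; last exact: raddf0.
apply/eqP; apply: contraT => nX0; have := congr1 (@redR f) (teich_expr_q1 hX nX0).
by rewrite redRX X0 redR1 expr0n subn_eq0 leqNgt q_gt1 => /esym/eqP; rewrite oner_eq0.
Qed.

Lemma redR_teich_inj : {in T &, injective (@redR f)}.
Proof.
move=> X Y hX hY eXY; have [Y0|nY0] := eqVneq Y 0.
  by move: eXY; rewrite Y0 raddf0 /= => /eqP; rewrite redR_teich_eq0 // => /eqP.
have YY' : Y * Y ^+ (q - 2) = 1.
  by rewrite -exprS subnSK ?q_gt1 // teich_expr_q1.
have XY' : X * Y ^+ (q - 2) = 1.
  apply: teich_redR_eq1; first by rewrite teichM ?teichX.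
  by rewrite redRM eXY -redRM YY' redR1.
by rewrite -[X]mulr1 -YY' mulrCA XY' mulr1.
Qed.

Lemma card_Fq : #|F| = q.
Proof.
by rewrite card_monic_qpoly ?size_fbar ?fbar_monic // card_Fp // f_size.
Qed.

Lemma redR_teich_onto : (@redR f) @: T = [set: F].
Proof.
apply/eqP; rewrite eqEcard subsetT cardsT card_Fq card_in_imset ?card_teich ?leqnn //.
exact: redR_teich_inj.
Qed.

Definition tlift (z : F) : R := odflt 0 [pick X in T | redR X == z].

Lemma tliftP (z : F) : tlift z \in T /\ redR (tlift z) = z.
Proof.
rewrite /tlift; case: pickP => [X /andP[hX /eqP]|no_lift] //=.
have : z \in (@redR f) @: T by rewrite redR_teich_onto inE.
by case/imsetP=> X hX ez; move: (no_lift X); rewrite hX ez eqxx.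
Qed.

Lemma tlift_teich z : tlift z \in T. Proof. by case: (tliftP z). Qed.
Lemma tliftK : cancel tlift (@redR f). Proof. by move=> z; case: (tliftP z). Qed.

Lemma tlift_redR (X : R) : X \in T -> tlift (redR X) = X.
Proof. by move=> hX; apply: redR_teich_inj; rewrite ?tlift_teich ?tliftK. Qed.

Lemma tlift_inj : injective tlift. Proof. exact: can_inj tliftK. Qed.

Lemma teich_tliftE : T = [set tlift z | z in [set: F]].
Proof.
apply/eqP; rewrite eq_sym eqEcard card_imset ?cardsT ?card_Fq ?card_teich //.
  by rewrite leqnn andbT; apply/subsetP => X /imsetP[z _ ->]; exact: tlift_teich.
exact: tlift_inj.
Qed.

Lemma Fq_expr_q (z : F) : z ^+ q = z.
Proof. by rewrite -[z]tliftK -redRX teich_expr_q ?tlift_teich. Qed.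

Lemma Fq_sqrK (z : F) : (z ^+ qh) ^+ 2 = z.
Proof. by rewrite -exprM qh_double Fq_expr_q. Qed.

Lemma sqrtFE (z : F) : sqrtF z = z ^+ qh.
Proof.
rewrite /sqrtF; case: pickP => [y /eqP yz | no_root] /=; last first.
  by move: (no_root (z ^+ qh)); rewrite Fq_sqrK eqxx.
have sq0 : (y + z ^+ qh) ^+ 2 = 0.
  by rewrite Fq_sqrD yz Fq_sqrK Fq_addrr.
have : y + z ^+ qh = 0.
  by rewrite -[LHS]Fq_expr_q -qh_double mulnC exprM sq0 expr0n expn_eq0.
by move/eqP; rewrite addr_eq0 (oppr_pchar2 pchar_Fq) => /eqP.
Qed.

Lemma tlift_decomp (w : R) : exists C, w = tlift (redR w) + (C + C).
Proof.
have /redR_eq0_double [C eC] : redR (w - tlift (redR w)) = 0.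
  by rewrite raddfB /= tliftK subrr.
by exists C; rewrite -eC addrC subrK.
Qed.

Lemma sqr_tlift (w : R) : w ^+ 2 = tlift (redR w) ^+ 2.
Proof. by have [C {1}->] := tlift_decomp w; rewrite sqr_add_double. Qed.

Lemma teich_sqrtK (X : R) : X \in T -> (X ^+ qh) ^+ 2 = X.
Proof. by move=> hX; rewrite -exprM qh_double teich_expr_q. Qed.

Lemma teich_sqrt_add (X Y : R) : X \in T -> Y \in T ->
  (X ^+ qh + Y ^+ qh) ^+ 2 = tlift (redR X + redR Y).
Proof.
move=> hX hY; have hS : (X ^+ qh + Y ^+ qh) ^+ 2 \in T.
  by rewrite sqr_tlift teichX ?tlift_teich.
by rewrite -(tlift_redR hS) redRX raddfD /= Fq_sqrD -!redRX !teich_sqrtK.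
Qed.

Lemma teich_addE (X Y : R) : X \in T -> Y \in T ->
  X + Y = (X ^+ qh + Y ^+ qh) ^+ 2 + (X ^+ qh * Y ^+ qh + X ^+ qh * Y ^+ qh).
Proof.
move=> hX hY; rewrite -{1}(teich_sqrtK hX) -{1}(teich_sqrtK hY).
set a := X ^+ qh; set b := Y ^+ qh.
have -> : a ^+ 2 + b ^+ 2 = (a + b) ^+ 2 + (a * b + a * b) - (a * b) *+ 4 by ring.
by rewrite mulrn4_GR subr0.
Qed.

Lemma sigmaF_teich (A C : R) :
  A \in T -> sigmaF m beta (A + (C + C)) = A ^+ 2 + (C ^+ 2 + C ^+ 2).
Proof.
move=> hA; rewrite /sigmaF; case: pickP => [[A' C'] | no_decomp] /=.
  rewrite !mulr_natl !mulr2n => /andP[/andP[hA' _] /eqP e].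
  have eA : A = A'.
    apply: redR_teich_inj => //; move/(congr1 (@redR f)): e.
    by rewrite !raddfD /= !Fq_addrr !addr0.
  rewrite -eA in e *; move/addrI/eqP: e; rewrite double_GR_inj => /eqP eC.
  by congr (_ + _); apply/eqP; rewrite double_GR_inj !redRX eC.
have := no_decomp (A, tlift (redR C)); rewrite /= hA tlift_teich mulr_natl mulr2n.
suff -> : tlift (redR C) + tlift (redR C) = C + C by rewrite eqxx.
by apply/eqP; rewrite double_GR_inj tliftK.
Qed.

Lemma sigmaF_double (C : R) : sigmaF m beta (C + C) = C ^+ 2 + C ^+ 2.
Proof. by rewrite -[C + C]add0r sigmaF_teich ?teich0 // expr0n add0r. Qed.

Lemma sigmaFD (w w' : R) :
  sigmaF m beta (w + w') = sigmaF m beta w + sigmaF m beta w'.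
Proof.
have [C ->] := tlift_decomp w; have [C' ->] := tlift_decomp w'.
set A := tlift (redR w); set A' := tlift (redR w').
have hA : A \in T by exact: tlift_teich.
have hA' : A' \in T by exact: tlift_teich.
rewrite !sigmaF_teich //; have := teich_addE hA hA'.
set a := A ^+ qh; set b := A' ^+ qh => eAA'.
have hS : (a + b) ^+ 2 \in T by rewrite teich_sqrt_add ?tlift_teich.
have -> : A + (C + C) + (A' + (C' + C')) =
          (a + b) ^+ 2 + ((a * b + C + C') + (a * b + C + C')).
  by rewrite addrACA eAA'; ring.
rewrite sigmaF_teich // -(teich_sqrtK hA) -(teich_sqrtK hA') -/a -/b.
(* ((a + b) ^+ 2) ^+ 2 + 2 (a b + C + C') ^+ 2 exceeds the right-hand side by 4 K. *)
set K := a ^+ 3 * b + (a ^+ 2 * b ^+ 2) *+ 2 + a * b ^+ 3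
         + a * b * C + a * b * C' + C * C'.
rewrite -[RHS]addr0 -(mulrn4_GR K) /K; ring.
Qed.

Lemma iter_sigmaFD j (w w' : R) :
  iter j (sigmaF m beta) (w + w') =
  iter j (sigmaF m beta) w + iter j (sigmaF m beta) w'.
Proof. by elim: j => [|j IH] //=; rewrite IH sigmaFD. Qed.

Lemma iter_sigmaF_double j (C : R) :
  iter j (sigmaF m beta) (C + C) = C ^+ (2 ^ j) + C ^+ (2 ^ j).
Proof.
by elim: j => [|j IH] /=; rewrite ?expn0 ?expr1 // IH sigmaF_double -!exprM expnSr.
Qed.

Lemma trGRD (w w' : R) : trGR m beta (w + w') = trGR m beta w + trGR m beta w'.
Proof.
rewrite /trGR (eq_bigr _ (fun (j : 'I_m) _ => iter_sigmaFD j w w')) big_split /=.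
by rewrite -coefD -val_qpolyD.
Qed.

Lemma Fq_expr_q1 (z : F) : z != 0 -> z ^+ (q - 1) = 1.
Proof.
move=> z0; rewrite -[z]tliftK -redRX teich_expr_q1 ?redR1 ?tlift_teich //.
by apply: contraNneq z0 => X0; rewrite -[z]tliftK X0 raddf0.
Qed.

Lemma Fq_unit (z : F) : z != 0 -> z \is a GRing.unit.
Proof.
move=> z0; apply/unitrPr; exists (z ^+ (q - 2)).
by rewrite -exprS subnSK ?q_gt1 // Fq_expr_q1.
Qed.

Lemma Fq_idem (t : F) : t ^+ 2 = t -> t = 0 \/ t = 1.
Proof.
move=> tt; have [->|t0] := eqVneq t 0; [by left | right].
by apply: (mulrI (Fq_unit t0)); rewrite mulr1 -expr2.
Qed.

Lemma atrD (x y : F) : atr m (x + y) = atr m x + atr m y.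
Proof. by rewrite /atr -big_split; apply: eq_bigr => j _; exact: Fq_exprD_2n. Qed.

Lemma atr0 : atr m (0 : F) = 0.
Proof. by rewrite /atr big1 // => j _; rewrite expr0n expn_eq0. Qed.

(* Squaring shifts the summands cyclically, since x ^+ (2 ^ m) = x. *)
Lemma atr_sqr (x : F) : atr m (x ^+ 2) = atr m x.
Proof.
rewrite /atr (eq_bigr (fun j : 'I_m => x ^+ (2 ^ j.+1))) => [|j _]; last first.
  by rewrite -exprM expnS.
move: (Fq_expr_q x); rewrite -(prednK m_gt0) => xq.
by rewrite big_ord_recr big_ord_recl /= xq addrC.
Qed.

Lemma atr_idem (x : F) : atr m x ^+ 2 = atr m x.
Proof.
rewrite -{2}atr_sqr /atr (big_morph (fun y : F => y ^+ 2) Fq_sqrD (expr0n _ 2)).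
by apply: eq_bigr => j _; rewrite -!exprM mulnC.
Qed.

Lemma atr01 (x : F) : atr m x = 0 \/ atr m x = 1.
Proof. exact/Fq_idem/atr_idem. Qed.

Definition trsign (t : F) : algC := if atr m t == 0 then 1 else -1.

Lemma trsignD (x y : F) : trsign (x + y) = trsign x * trsign y.
Proof.
rewrite /trsign atrD; case: (atr01 x) => ->; case: (atr01 y) => ->;
by rewrite ?addr0 ?add0r ?Fq_addrr ?eqxx ?oner_eq0 ?mulr1 ?mul1r ?mulrNN ?mulr1.
Qed.

Lemma trsign0 : trsign 0 = 1.
Proof. by rewrite /trsign atr0 eqxx. Qed.

Lemma trsignK (t : F) : trsign t * trsign t = 1.
Proof. by rewrite -trsignD Fq_addrr trsign0. Qed.

Lemma uniq_roots_Fq (s : seq F) : uniq s -> uniq_roots s.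
Proof.
elim: s => [|x s IH] //= /andP[xs us]; rewrite IH // andbT.
apply/allP => y ys; rewrite /diff_roots mulrC eqxx /=; apply: Fq_unit.
by rewrite subr_eq0; apply: contraNneq xs => <-.
Qed.

(* The trace is a polynomial of degree 2 ^ (m - 1) < q, so it cannot vanish on F. *)
Lemma atr_neq0 : exists x : F, atr m x != 0.
Proof.
apply/existsP; apply: contraT; rewrite negb_exists => /forallP atr_eq0.
pose P : {poly F} := \sum_(j < m) 'X^(2 ^ j).
have P_atr x : P.[x] = atr m x.
  by rewrite horner_sum; apply: eq_bigr => j _; rewrite hornerXn.
have P1 : P`_1 = 1.
  rewrite coef_sum -(prednK m_gt0) big_ord_recl coefXn /= big1 ?addr0 // => j _.
  rewrite coefXn /bump /= expnS; case: eqP => // h; exfalso.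
  by have := expn_gt0 2 j; lia.
have P_neq0 : P != 0 by apply: contra_eq_neq P1 => ->; rewrite coef0 eq_sym oner_eq0.
have size_P : (size P <= qh.+1)%N.
  rewrite (leq_trans (size_sum _ _ _)) //; apply/bigmax_leqP => j _.
  by rewrite size_polyXn ltnS leq_exp2l // -ltnS prednK.
have roots_P : all (root P) (enum F).
  by apply/allP => x _; rewrite /root P_atr; exact: negbNE (atr_eq0 x).
have := max_ring_poly_roots P_neq0 roots_P (uniq_roots_Fq (enum_uniq F)).
rewrite -cardE card_Fq -qh_double => /leq_trans/(_ size_P) q_small.
by exfalso; have := expn_gt0 2 m.-1; lia.
Qed.

Lemma sum_trsign (c : F) :
  \sum_(x : F) trsign (x * c) = if c == 0 then (q%:R : algC) else 0.
Proof.
have [-> | c0] := eqVneq c 0.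
  rewrite (eq_bigr (fun _ => 1)) => [|x _]; last by rewrite mulr0 trsign0.
  by rewrite sumr_const card_Fq.
have [x0 atr_x0] := atr_neq0; set x1 := x0 / c.
have x1_sign : trsign (x1 * c) = -1.
  by rewrite /x1 (divrK (Fq_unit c0)) /trsign (negbTE atr_x0).
set S := \sum_(x : F) trsign (x * c).
have : S = - S.
  rewrite {1}/S (reindex_inj (addIr x1)) /= /S -mulN1r mulr_sumr.
  by apply: eq_bigr => x _; rewrite mulrDl trsignD x1_sign mulrC.
by move/eqP; rewrite -addr_eq0 -mulr2n mulrn_eq0 => /eqP.
Qed.

Local Notation psi := (iexp m beta).

Lemma iexpD (w w' : R) : psi (w + w') = psi w * psi w'.
Proof.
have i4 : 'i ^+ 4 = 1 :> algC by rewrite (exprM _ 2 2) sqrCi sqrrN expr1n.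
by rewrite /iexp trGRD -exprD -(expr_mod _ i4).
Qed.

Lemma iexp0 : psi 0 = 1.
Proof.
have tr0 : trGR m beta 0 = 0 by apply: (addrI (trGR m beta 0)); rewrite -trGRD !addr0.
by rewrite /iexp tr0.
Qed.

Lemma iexp_conj (w : R) : (psi w)^* = psi (- w).
Proof.
have /(congr1 (fun z => z * psi (- w))) : (psi w)^* * psi w = 1.
  by rewrite -normCKC normrX normCi !expr1n.
by rewrite mul1r -mulrA -iexpD addrN iexp0 mulr1.
Qed.

Lemma iexp_double (C : R) : psi (C + C) = trsign (redR C).
Proof.
set P : R := \sum_(j < m) C ^+ (2 ^ j).
have trCC : trGR m beta (C + C) = (val P)`_0 + (val P)`_0.
  rewrite /trGR (eq_bigr _ (fun (j : 'I_m) _ => iter_sigmaF_double j C)) big_split /=.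
  by rewrite -coefD -val_qpolyD.
have redP : red2 (val P)`_0 = (val (atr m (redR C)))`_0.
  rewrite -coef_map_id0 ?rmorph0 // -val_redR raddf_sum /=.
  by congr (val _)`_0; rewrite /atr; under eq_bigr => j _ do rewrite /= redRX.
rewrite /iexp /trsign trCC; case: (atr01 (redR C)) => atrC; rewrite atrC in redP *.
  have -> : (val P)`_0 + (val P)`_0 = 0.
    by apply/eqP; rewrite Z4_double_eq0 redP coef0.
  by rewrite eqxx.
by rewrite oner_eq0 Z4_double_odd ?sqrCi // redP; exact: (coef1 _ 0).
Qed.

Section EtaSums.
Variable a : R.

Local Notation u := (redR a).

Definition eta_term (z : F) : algC := psi (a * tlift z + 2%:R * tlift z ^+ 3).

Local Notation S := (\sum_(z | h_u u z == 0) eta_term z).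

Lemma h_uE (z : F) : h_u u z = z ^+ 2 + u ^+ 2 * z + z ^+ qh.
Proof. by rewrite /h_u sqrtFE. Qed.

Lemma h_uD (x y : F) : h_u u (x + y) = h_u u x + h_u u y.
Proof. by rewrite !h_uE Fq_sqrD Fq_exprD_2n mulrDr; ring. Qed.

Lemma h_u_u2 : h_u u (u ^+ 2) = u.
Proof. by rewrite h_uE -expr2 Fq_addrr add0r -exprM mulnC exprM Fq_sqrK. Qed.

Lemma atr_frobenius (x y : F) : atr m (x * y ^+ qh) = atr m (x ^+ 2 * y).
Proof. by rewrite -atr_sqr exprMn Fq_sqrK. Qed.

Lemma atr_h_u_sym (x z : F) : atr m (z * h_u u x) = atr m (x * h_u u z).
Proof.
rewrite !h_uE !mulrDr !atrD !atr_frobenius.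
rewrite (mulrC z (x ^+ 2)) (mulrC x (z ^+ 2)).
have -> : z * (u ^+ 2 * x) = x * (u ^+ 2 * z) by ring.
by ring.
Qed.

Lemma atr_h_u_diag (x : F) : atr m (x * h_u u x) = atr m (u * x).
Proof.
rewrite h_uE !mulrDr !atrD atr_frobenius (_ : x * (u ^+ 2 * x) = (u * x) ^+ 2).
  by rewrite atr_sqr (mulrC x) -addrA addrCA Fq_addrr addr0.
by ring.
Qed.

Lemma atr_cross (z z' : F) :
  atr m (u * (z ^+ qh * z' ^+ qh) + ((z + z') ^+ 3 + z ^+ 3 + z' ^+ 3)) =
  atr m (z' * h_u u z).
Proof.
set W := z ^+ 2 * z' + z * z' ^+ 2 + z ^+ 3 + z' ^+ 3.
have -> : (z + z') ^+ 3 + z ^+ 3 + z' ^+ 3 = z ^+ 2 * z' + z * z' ^+ 2 + (W + W).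
  by rewrite /W; ring.
rewrite Fq_addrr addr0 h_uE !mulrDr !atrD atr_frobenius -[atr m (u * _)]atr_sqr.
rewrite !exprMn !Fq_sqrK (mulrC z' (z ^+ 2)) (mulrC (z' ^+ 2)).
have -> : z' * (u ^+ 2 * z) = u ^+ 2 * (z * z') by ring.
by ring.
Qed.

Lemma tlift_add (z z' : F) :
  tlift (z + z') = tlift z + tlift z' +
                   (tlift z ^+ qh * tlift z' ^+ qh + tlift z ^+ qh * tlift z' ^+ qh).
Proof.
have := teich_addE (tlift_teich z) (tlift_teich z').
rewrite teich_sqrt_add ?tlift_teich // !tliftK => ->.
set D := _ * _; rewrite -addrA -[RHS]subr0 -(mulrn4_GR D); ring.
Qed.

(* The cubic form at the lift Z + Z' + 2 D of z + z' exceeds its values at Z and Z'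
   by 2 E, and E reduces to the argument of atr_cross. *)
Lemma eta_termD (z z' : F) :
  eta_term (z + z') = eta_term z * eta_term z' * trsign (z' * h_u u z).
Proof.
rewrite /eta_term; have := tlift_add z z'.
set Z := tlift z; set Z' := tlift z'; set Z'' := tlift (z + z').
set D := Z ^+ qh * Z' ^+ qh => eZ''.
set E := a * D + Z'' ^+ 3 + Z ^+ 3 + Z' ^+ 3.
have -> : a * Z'' + 2%:R * Z'' ^+ 3 =
    (a * Z + 2%:R * Z ^+ 3) + (a * Z' + 2%:R * Z' ^+ 3) + (E + E)
    - (Z ^+ 3 + Z' ^+ 3) *+ 4.
  by rewrite /E eZ''; ring.
rewrite mulrn4_GR subr0 iexpD iexp_double iexpD; congr (_ * _).
rewrite /trsign -atr_cross /E /D !raddfD /= !redRM !redRX /Z /Z' /Z'' !tliftK.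
by rewrite -!addrA.
Qed.

Lemma tlift0 : tlift 0 = 0.
Proof. by rewrite -(tlift_redR teich0) raddf0. Qed.

Lemma eta_term0 : eta_term 0 = 1.
Proof. by rewrite /eta_term tlift0 mulr0 expr0n mulr0 addr0 iexp0. Qed.

Lemma f_uE (z : F) : f_u u z = h_u u z + u.
Proof. by []. Qed.

Lemma eta_term_pair (x z : F) :
  eta_term x * eta_term (x + z) = eta_term z * trsign (x * f_u u z).
Proof.
have := eta_termD x (x + z); rewrite addrA Fq_addrr add0r => ->.
have -> : trsign (x * f_u u z) = trsign ((x + z) * h_u u x).
  rewrite /trsign f_uE mulrDr mulrDl !atrD atr_h_u_diag atr_h_u_sym (mulrC x u).
  by rewrite addrC.
by rewrite -mulrA trsignK mulr1.
Qed.

Lemma eta_term_conj (y : F) : (eta_term y)^* = eta_term y * trsign (u * y).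
Proof.
rewrite /eta_term iexp_conj; set w := a * tlift y + _.
have -> : - w = w + (w + w) - w *+ 4 by ring.
rewrite mulrn4_GR subr0 iexpD iexp_double /w raddfD /= redRM tliftK mulr_natl mulr2n.
by rewrite raddfD /= Fq_addrr addr0.
Qed.

Lemma sum_trsign_filter (c : F -> F) (G : F -> algC) :
  \sum_x \sum_z G z * trsign (x * c z) = q%:R * \sum_(z | c z == 0) G z.
Proof.
rewrite exchange_big mulr_sumr [RHS]big_mkcond /=; apply: eq_bigr => z _.
by rewrite -mulr_sumr sum_trsign; case: ifP; rewrite ?mulr0 // mulrC.
Qed.

Lemma sum_eta_term_sqr :
  (\sum_z eta_term z) ^+ 2 = q%:R * \sum_(z | f_u u z == 0) eta_term z.
Proof.
rewrite expr2 mulr_suml -sum_trsign_filter; apply: eq_bigr => x _.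
rewrite mulr_sumr (reindex_inj (addrI x)) /=.
by apply: eq_bigr => z _; exact: eta_term_pair.
Qed.

Lemma atr_u_ker (z : F) : h_u u z = 0 -> atr m (u * z) = 0.
Proof. by move=> hz; rewrite -{1}h_u_u2 mulrC atr_h_u_sym hz mulr0 atr0. Qed.

Lemma sum_eta_term_norm :
  (\sum_z eta_term z) * (\sum_z eta_term z)^* = q%:R * S.
Proof.
rewrite rmorph_sum mulr_suml.
transitivity (\sum_x \sum_z eta_term z * trsign (u * z) * trsign (x * h_u u z)).
  apply: eq_bigr => x _; rewrite mulr_sumr (reindex_inj (addrI x)) /=.
  apply: eq_bigr => z _; rewrite eta_term_conj mulrA eta_term_pair -!mulrA -!trsignD f_uE.
  have -> : x * (h_u u z + u) + u * (x + z) = u * z + x * h_u u z + (u * x + u * x).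
    by ring.
  by rewrite Fq_addrr addr0.
rewrite sum_trsign_filter; congr (_ * _); apply: eq_bigr => z /eqP hz.
by rewrite /trsign atr_u_ker // eqxx mulr1.
Qed.

Lemma card_Fu : #|Fu u| = #|[set z | h_u u z == 0]|.
Proof.
have -> : Fu u = [set z + u ^+ 2 | z in [set z | h_u u z == 0]].
  apply/setP => z; rewrite !inE f_uE; apply/idP/imsetP => [hz | [y hy ->]].
    exists (z + u ^+ 2); last by rewrite -addrA Fq_addrr addr0.
    by rewrite inE h_uD h_u_u2.
  by move: hy; rewrite inE h_uD h_u_u2 -addrA Fq_addrr addr0.
by rewrite card_imset //; exact: addIr.
Qed.

Lemma eta_term_ker (h z : F) :
  h_u u h = 0 -> eta_term (h + z) = eta_term h * eta_term z.
Proof. by move=> hh; rewrite eta_termD hh mulr0 trsign0 mulr1. Qed.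

Lemma sum_eta_term_ker_shift (h : F) : h_u u h = 0 -> S * eta_term h = S.
Proof.
move=> hh; rewrite mulr_suml [RHS](reindex_inj (addrI h)) /=.
apply: eq_big => [z | z _]; first by rewrite h_uD hh add0r.
by rewrite eta_term_ker // mulrC.
Qed.

(* eta_term is a +-1 character on the kernel of h_u, so S is either the order of
   the kernel or 0. *)
Lemma sum_eta_term_ker_sqr : S ^+ 2 = #|[set z | h_u u z == 0]|%:R * S.
Proof.
case: (pickP (fun h => (h_u u h == 0) && (eta_term h != 1))) => [h | all_one].
  case/andP=> /eqP hh gh1; have gh : eta_term h = -1.
    have : (eta_term h - 1) * (eta_term h + 1) = 0.
      by rewrite -subr_sqr expr1n expr2 -eta_term_ker // Fq_addrr eta_term0 subrr.
    by move/eqP; rewrite mulf_eq0 subr_eq0 (negbTE gh1) addr_eq0 => /eqP.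
  have : S *+ 2 = 0 by rewrite mulr2n -{1}(sum_eta_term_ker_shift hh) gh mulrN1 addNr.
  by move/eqP; rewrite mulrn_eq0 /= => /eqP ->; rewrite expr0n mulr0.
suff -> : S = #|[set z | h_u u z == 0]|%:R by rewrite expr2.
rewrite (eq_bigr (fun _ => 1)) => [|z /eqP hz]; last first.
  by move: (all_one z); rewrite hz eqxx /= => /negbFE/eqP.
by rewrite sumr_const; congr (_ *+ _); apply: eq_card => z; rewrite inE.
Qed.

Lemma sum_eta_term_f_u :
  \sum_(z | f_u u z == 0) eta_term z = eta_term (u ^+ 2) * S.
Proof.
rewrite mulr_sumr (reindex_inj (addIr (u ^+ 2))) /=.
apply: eq_big => [z | z /eqP hz]; first by rewrite f_uE h_uD h_u_u2 -addrA Fq_addrr addr0.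
have hz0 : h_u u z = 0 by move: hz; rewrite f_uE h_uD h_u_u2 -addrA Fq_addrr addr0.
by rewrite eta_termD hz0 mulr0 trsign0 mulr1 mulrC.
Qed.

Lemma eta_term_u2_sqr : eta_term (u ^+ 2) ^+ 2 = trsign (u ^+ 3).
Proof.
rewrite expr2 /eta_term -iexpD iexp_double raddfD /= redRM tliftK mulr_natl mulr2n.
by rewrite raddfD /= Fq_addrr addr0 -exprS.
Qed.

Lemma sum_teich (P : pred F) (G : R -> algC) :
  \sum_(Z in T | P (redR Z)) G Z = \sum_(z | P z) G (tlift z).
Proof.
rewrite big_mkcondr teich_tliftE big_imset /=; last by move=> x y _ _; apply: tlift_inj.
by rewrite [RHS]big_mkcond; apply: eq_big => [x|x _]; rewrite ?inE ?tliftK.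
Qed.

Lemma etaGR_sum : etaGR m beta a = \sum_z eta_term z.
Proof.
rewrite /etaGR teich_tliftE big_imset /=; last by move=> x y _ _; apply: tlift_inj.
by apply: eq_bigl => z; rewrite inE.
Qed.

Lemma eta_sqrE : etaGR m beta a ^+ 2 =
  q%:R * \sum_(Z in T | f_u u (redR Z) == 0) psi (a * Z + 2%:R * Z ^+ 3).
Proof. by rewrite etaGR_sum sum_eta_term_sqr (sum_teich (fun z => f_u u z == 0)). Qed.

Lemma eta_normE : etaGR m beta a * (etaGR m beta a)^* =
  q%:R * \sum_(Z in T | h_u u (redR Z) == 0) psi (a * Z + 2%:R * Z ^+ 3).
Proof. by rewrite etaGR_sum sum_eta_term_norm (sum_teich (fun z => h_u u z == 0)). Qed.

End EtaSums.
End Teichmuller.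
End Reduction.

Theorem lemmaC1 (m : nat) (f : {poly 'Z_4})
  (f_monic : f \is monic) (f_size : size f = m.+1)
  (f_irr : irreducible_poly (fbar f))
  (beta : GR f)
  (beta_ord : beta ^+ (2 ^ m - 1) = 1)
  (beta_prim : forall k : nat, (0 < k < 2 ^ m - 1)%N -> beta ^+ k != 1)
  (a : GR f) :
  let u := redR a in
  let e := etaGR m beta a in
  let q : algC := (2 ^ m)%:R in
  let sgn : algC := if atr m (u ^+ 3) == 0 then 1 else -1 in
  let nF : algC := (#|Fu u|)%:R in
  [/\ e ^+ 2 = q * \sum_(Z in teich m beta | f_u u (redR Z) == 0)
                     iexp m beta (a * Z + 2%:R * Z ^+ 3),
      e * e^* = q * \sum_(Z in teich m beta | h_u u (redR Z) == 0)
                     iexp m beta (a * Z + 2%:R * Z ^+ 3),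
      e ^+ 4 = q * sgn * nF * (e * e^*),
      (e * e^*) ^+ 2 = q * nF * (e * e^*)
    & e ^+ 3 * e^* = q * nF * e ^+ 2].
Proof.
move=> u e q sgn nF.
(* Irreducibility is only used for m > 0: beta already makes F_q a field. *)
have f_gt1 : (1 < size f)%N by rewrite -(size_fbar f_monic); case: f_irr.
set S := \sum_(z | h_u u z == 0) eta_term m beta a z.
set g := eta_term m beta a (u ^+ 2).
have e2 : e ^+ 2 = q * (g * S).
  by rewrite /e etaGR_sum // sum_eta_term_sqr // sum_eta_term_f_u.
have e_norm : e * e^* = q * S by rewrite /e etaGR_sum // sum_eta_term_norm.
have S2 : S ^+ 2 = nF * S.
  rewrite sum_eta_term_ker_sqr // /nF.
  by rewrite (card_Fu f_monic f_gt1 f_size beta_ord beta_prim).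
have g2 : g ^+ 2 = sgn by rewrite eta_term_u2_sqr.
split.
- exact: eta_sqrE.
- exact: eta_normE.
- have -> : e ^+ 4 = (e ^+ 2) ^+ 2 by rewrite -exprM.
  by rewrite e2 e_norm !exprMn g2 S2; ring.
- by rewrite e_norm exprMn S2; ring.
- have -> : e ^+ 3 * e^* = e ^+ 2 * (e * e^*) by ring.
  rewrite e2 e_norm; transitivity (q ^+ 2 * g * S ^+ 2); first by ring.
  by rewrite S2; ring.
Qed.
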